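(* Let $J_-,J_+\subset\mathbb Z$ be disjoint finite arithmetic progressions with the same common difference and $J=J_-\cup J_+$. If $\mathcal D\in\mathrm{DO}_n(J)$ corresponds to a generic twisted $J$-corrugated $n$-gon and $\tilde{\mathcal D}\in\mathrm{DO}_n(J)$ satisfies $\tilde{\mathcal D}_+\mathcal D_-=\tilde{\mathcal D}_-\mathcal D_+$ (so that $\tilde{\mathcal D}$ corresponds to the image under the pentagram map associated with $(J_-,J_+)$), then $$\tilde{\mathcal L}(z)=\tilde{\mathcal D}_-(z)^{-1}\tilde{\mathcal D}_+(z)=\mathcal D_+(z)\mathcal D_-(z)^{-1}.$$ Thus, in terms of the Lax operator $\mathcal L(z)=\mathcal D_-(z)^{-1}\mathcal D_+(z)$ (as an element of $\widetilde{\mathrm{GL}}_n/(\mathrm{Ad}\,\mathbb T\times\mathbb R^* )$), the pentagram map is the refactorization $\mathcal D_-^{-1}(z)\mathcal D_+(z)\mapsto\mathcal D_+(z)\mathcal D_-^{-1}(z)$, i.e. it admits the Lax representation with spectral parameter $\mathcal L(z)\mapsto\mathcal D_+(z)\mathcal L(z)\mathcal D_+(z)^{-1}$.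
   Context: A scalar operator is a bi-infinite real sequence $a=(a_i)$ acting by $(aV)_i=a_iV_i$; $T$ is the left shift. An $n$-periodic difference operator is a finite sum $\sum_j a^{(j)}T^j$ with $n$-periodic coefficients; $\mathrm{DO}_n(J)$ consists of those of the form $\sum_{j\in J}a^{(j)}T^j$; for such $\mathcal D$, $\mathcal D_\pm=\sum_{j\in J_\pm}a^{(j)}T^j$. $\mathcal D(z)$ is the matrix Laurent polynomial obtained by sending a scalar operator $a$ to $\mathrm{diag}(a_1,\dots,a_n)$ and $T$ to the matrix with $1$'s at positions $(i,i+1)$ and $z$ at $(n,1)$. $\widetilde{\mathrm{GL}}_n$ is the group of invertible matrix-valued rational functions of $z$; $\mathrm{Ad}\,\mathbb T$ denotes conjugation by constant invertible diagonal matrices and $\mathbb R^*$ acts by $z\mapsto tz$. For $d=\max J-\min J-1$, a twisted $J$-corrugated $n$-gon is a sequence $v_i\in\mathbb{RP}^d$ with $v_{i+n}=M(v_i)$ ($M$ projective) such that for each $i$ the points $v_{i+j}$, $j\in J$, lie in a projective subspace of dimension $|J|-2$; $\mathcal D$ corresponds to it if $\mathcal DV=0$ for a lift $V$. The pentagram map associated with $(J_-,J_+)$ is $\tilde v_i=\mathrm{span}\{v_{i+j}:j\in J_-\}\cap\mathrm{span}\{v_{i+j}:j\in J_+\}$. *)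

From HB Require Import structures.
From mathcomp Require Import all_boot all_order all_algebra fraction.
Set Implicit Arguments. Unset Strict Implicit. Unset Printing Implicit Defensive.
Import Order.TTheory GRing.Theory Num.Theory.
Local Open Scope ring_scope.

Definition is_AP_with (d : nat) (J : seq int) : Prop :=
  exists (m : int) (k : nat), J = [seq m + (i%:Z * d%:Z) | i <- iota 0 k.+1].

Definition maxJ (J : seq int) : int := foldr Num.max (head 0 J) J.
Definition minJ (J : seq int) : int := foldr Num.min (head 0 J) J.
(* d + 1 where d = max J - min J - 1 is the dimension of the projective space *)
Definition ambdim (J : seq int) : nat := `|maxJ J - minJ J|%N.

(* An operator in DO_n(J) is  sum_{j in J} a^{(j)} T^j ; it is encoded by    *)
(* its coefficient function  a : int -> int -> R,  a j i = a^{(j)}_i, which   *)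
(* is required to be n-periodic in i.  Only the values for j in J matter.    *)
Definition periodic_coeffs (R : Type) (n : nat) (a : int -> int -> R) : Prop :=
  forall j i, a j (i + n%:Z) = a j i.

Definition applyDO (R : pzRingType) (a : int -> int -> R) (J : seq int)
  (V : int -> R) : int -> R :=
  fun i => \sum_(j <- J) a j i * V (i + j).

(* v_i in RP^d are given by a lift V_i in R^{d+1}\{0}; the twist condition   *)
(* v_{i+n} = M(v_i) reads V_{i+n} = c_i M V_i with c_i <> 0, M invertible;   *)
(* the corrugation condition says the |J| points v_{i+j}, j in J, lie in a    *)
(* projective subspace of dimension |J|-2, i.e. the V_{i+j} span a linear    *)
(* subspace of dimension <= |J|-1; and D corresponds to the polygon: D V = 0. *)
Definition window_matrix (R : fieldType) (m : nat) (J : seq int)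
  (V : int -> 'cV[R]_m) (i : int) : 'M[R]_(size J, m) :=
  \matrix_(k < size J) (V (i + J`_k))^T.

Definition corresponds_to_corrugated_polygon (R : fieldType) (n : nat)
  (J : seq int) (a : int -> int -> R) : Prop :=
  exists (V : int -> 'cV[R]_(ambdim J)) (M : 'M[R]_(ambdim J)) (c : int -> R),
    [/\ M \in unitmx,
        (forall i, V i != 0),
        (forall i, c i != 0 /\ V (i + n%:Z) = c i *: (M *m V i)),
        (forall i, (\rank (@window_matrix R (ambdim J) J V i) < size J)%N) &
        (forall i, \sum_(j <- J) a j i *: V (i + j) = 0)].

(* The matrix Laurent polynomial D(z), with entries in the field of rational *)
(* functions R(z) = {fraction {poly R}}.  Indices are 0-based: the scalar    *)
(* operator a goes to diag(a_0, ..., a_{n-1}) and T goes to the matrix with  *)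
(* 1 at (i, i+1) and z at (n-1, 0).                                          *)
Definition ratf (R : idomainType) (p : {poly R}) : {fraction {poly R}} :=
  @FracField.tofrac {poly R} p.

Definition zvar (R : idomainType) : {fraction {poly R}} := ratf 'X.

Definition Tmat (R : idomainType) (n : nat) : 'M[{fraction {poly R}}]_n :=
  \matrix_(i < n, j < n)
     (if ((i : nat).+1 == (j : nat))%N then 1
      else if (((i : nat) == n.-1) && ((j : nat) == 0))%N then zvar R else 0).

Definition Tpow (R : idomainType) (n : nat) (j : int) : 'M[{fraction {poly R}}]_n :=
  if (0 <= j) then Tmat R n ^+ `|j|%N else invmx (Tmat R n) ^+ `|j|%N.

Definition DOz (R : idomainType) (n : nat) (a : int -> int -> R) (J : seq int)
  : 'M[{fraction {poly R}}]_n :=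
  \sum_(j <- J) diag_mx (\row_(i < n) ratf (a j (i : nat)%:Z)%:P) *m Tpow R n j.

(** The assignment [D |-> D(z)] turns composition of difference operators into
    the matrix product, provided the coefficients of the right factor are
    n-periodic: conjugating [diag(b)] by [T(z)^j] shifts [b] by [j].  Moreover
    [D(z)] only depends on [D] as a map on sequences, since the coefficient of
    [T^s] at [i] is the value at [i] of [D] applied to the Kronecker delta at
    [i + s].  Hence the operator identity [D~_+ D_- = D~_- D_+] gives
    [D~_+(z) D_-(z) = D~_-(z) D_+(z)], and multiplying by the inverses on both
    sides yields the refactorization. *)
From HB Require Import structures.
From mathcomp Require Import all_boot all_order all_algebra fraction.
Import Order.TTheory GRing.Theory Num.Theory.
Local Open Scope ring_scope.

Section SymbolOfDifferenceOperators.
Set Implicit Arguments. Unset Strict Implicit.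
Variables (R : idomainType) (n : nat).
Local Notation K := {fraction {poly R}}.
Local Notation T := (Tmat R n.+1).
Local Notation Tp := (Tpow R n.+1).

Lemma zvar_neq0 : zvar R != 0.
Proof. by rewrite /zvar /ratf tofrac_eq0 polyX_eq0. Qed.

Definition Tweight (i : 'I_n.+1) : K := if (i : nat) == n then zvar R else 1.

Lemma Tweight_neq0 i : Tweight i != 0.
Proof. by rewrite /Tweight; case: ifP => _; [exact: zvar_neq0 | exact: oner_neq0]. Qed.

Lemma TmatE i j : T i j = (ordS i == j)%:R * Tweight i.
Proof.
rewrite /Tmat mxE /Tweight -(inj_eq val_inj) /=.
case: (ltnP i n) => lt_in.
  by rewrite modn_small // (ltn_eqF lt_in) mulr1; case: eqP.
have -> : (i : nat) = n by apply/eqP; rewrite eqn_leq lt_in -ltnS ltn_ord.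
rewrite modnn eqxx /=.
have -> : (n.+1 == j) = false by apply/negbTE; rewrite neq_ltn ltn_ord orbT.
by case: (j : nat) => [|k] /=; rewrite ?mul1r ?mul0r.
Qed.

Lemma Tmat_unit : T \in unitmx.
Proof.
pose Tinv : 'M[K]_n.+1 := \matrix_(i, j) ((ordS j == i)%:R * (Tweight j)^-1).
have T_Tinv : T *m Tinv = 1%:M.
  apply/matrixP=> i j; rewrite !mxE (bigD1 (ordS i)) //= big1 => [|k ne_ki].
    rewrite addr0 TmatE !mxE eqxx mul1r (inj_eq (@ordS_inj _)) eq_sym.
    have [->|_] := eqVneq i j; last by rewrite !mul0r mulr0.
    by rewrite mul1r mulfV // Tweight_neq0.
  by rewrite [T _ _]TmatE eq_sym (negbTE ne_ki) !mul0r.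
exact: (proj1 (mulmx1_unit T_Tinv)).
Qed.

Lemma Tpow_exprz j : Tp j = T ^ j.
Proof.
rewrite /Tpow; case: j => k //=.
have invT : T^-1 = invmx T by reflexivity.
rewrite -invT exprVn; reflexivity.
Qed.

Lemma TpowD k j : Tp k *m Tp j = Tp (k + j).
Proof. by rewrite !Tpow_exprz (exprzDr (Tmat_unit : T \is a GRing.unit)). Qed.

Definition periodic (b : int -> R) := forall i, b (i + n.+1%:Z) = b i.

Lemma periodic_shift b c : periodic b -> periodic (fun x => b (x + c)).
Proof. by move=> per_b i; rewrite addrAC per_b. Qed.

Lemma periodic_modn b : periodic b -> forall m : nat, b (m %% n.+1)%N = b m.
Proof.
move=> per_b m; rewrite {2}(divn_eq m n.+1); elim: (m %/ n.+1)%N => [|q IHq].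
  by rewrite mul0n add0n.
by rewrite mulSn -addnA [in RHS]PoszD addrC per_b IHq.
Qed.

Definition diag_seq (b : int -> R) : 'M[K]_n.+1 :=
  diag_mx (\row_(i < n.+1) ratf (b (i : nat)%:Z)%:P).

Lemma eq_diag_seq b b' : b =1 b' -> diag_seq b = diag_seq b'.
Proof. by move=> eq_b; apply/matrixP=> i j; rewrite !mxE eq_b. Qed.

Lemma diag_seq0 : diag_seq (fun=> 0) = 0.
Proof.
by apply/matrixP=> i j; rewrite !mxE /ratf polyC0 tofrac0; case: (i == j); rewrite ?mulr0.
Qed.

Lemma diag_seqM b c : diag_seq b *m diag_seq c = diag_seq (fun x => b x * c x).
Proof.
by rewrite mulmx_diag; congr diag_mx; apply/matrixP=> i j; rewrite !mxE /ratf polyCM tofracM.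
Qed.

Lemma diag_seq_sum (I : Type) (r : seq I) (F : I -> int -> R) :
  \sum_(i <- r) diag_seq (F i) = diag_seq (fun x => \sum_(i <- r) F i x).
Proof.
elim: r => [|i r IHr].
  by rewrite big_nil -diag_seq0; apply: eq_diag_seq => x; rewrite big_nil.
rewrite big_cons IHr; apply/matrixP=> p q; rewrite !mxE big_cons /ratf polyCD tofracD.
by case: (p == q); rewrite ?mulr0 ?mulr1n ?addr0.
Qed.

Definition shifts_diag_seq (A : 'M[K]_n.+1) (c : int) :=
  forall b, periodic b -> A *m diag_seq b = diag_seq (fun x => b (x + c)) *m A.

Lemma Tmat_shifts : shifts_diag_seq T 1.
Proof.
move=> b per_b; apply/matrixP=> i j.
rewrite mul_mx_diag mul_diag_mx [LHS]mxE [RHS]mxE TmatE !mxE.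
case: eqP => [<- /=|_]; last by rewrite !mul0r mulr0.
by rewrite mul1r mulrC periodic_modn // intS addrC.
Qed.

Lemma invmx_shifts A c : A \in unitmx ->
  shifts_diag_seq A c -> shifts_diag_seq (invmx A) (- c).
Proof.
move=> A_unit A_sh b per_b.
have A_b : A *m diag_seq (fun x => b (x - c)) = diag_seq b *m A.
  rewrite A_sh; last exact: periodic_shift.
  by congr (_ *m _); apply: eq_diag_seq => x; rewrite addrK.
by rewrite -{1}(mulmxK A_unit (diag_seq b)) mulmxA -A_b mulKmx.
Qed.

Lemma exp_shifts A c k : shifts_diag_seq A c -> shifts_diag_seq (A ^+ k) (k%:Z * c).
Proof.
move=> A_sh; elim: k => [|k IHk] b per_b.
  by rewrite expr0 mul1mx mulmx1; apply: eq_diag_seq => x; rewrite mul0r addr0.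
rewrite exprS -mulmxA IHk // mulmxA A_sh; last exact: periodic_shift.
rewrite -mulmxA; congr (_ *m _); apply: eq_diag_seq => x.
by rewrite -addrA intS mulrDl mul1r (addrC c).
Qed.

Lemma Tpow_shifts j : shifts_diag_seq (Tp j) j.
Proof.
case: j => k b per_b; rewrite /Tpow /=.
  by rewrite (exp_shifts k Tmat_shifts per_b) mulr1.
rewrite (exp_shifts k.+1 (invmx_shifts Tmat_unit Tmat_shifts) per_b).
by congr (_ *m _); apply: eq_diag_seq => x; rewrite mulrN1 NegzE.
Qed.

Lemma DOzE (c : int -> int -> R) J : DOz n.+1 c J = \sum_(j <- J) diag_seq (c j) *m Tp j.
Proof. by []. Qed.

Lemma DOz_mul (c b : int -> int -> R) P Q : (forall j, periodic (b j)) ->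
  DOz n.+1 c P *m DOz n.+1 b Q =
  \sum_(k <- P) \sum_(j <- Q) diag_seq (fun x => c k x * b j (x + k)) *m Tp (k + j).
Proof.
move=> per_b; rewrite !DOzE mulmx_suml; apply: eq_bigr => k _.
rewrite mulmx_sumr; apply: eq_bigr => j _.
by rewrite -!mulmxA (mulmxA (Tp k)) Tpow_shifts // -mulmxA TpowD mulmxA diag_seqM.
Qed.

Definition delta (s : int) : int -> R := fun p => (p == s)%:R.

Definition opz (L : (int -> R) -> int -> R) (sh : seq int) : 'M[K]_n.+1 :=
  \sum_(s <- sh) diag_seq (fun x => L (delta (x + s)) x) *m Tp s.

Lemma eq_opz L L' sh : (forall V i, L V i = L' V i) -> opz L sh = opz L' sh.
Proof. by move=> eq_L; apply: eq_bigr => s _; congr (_ *m _); apply: eq_diag_seq => x. Qed.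

Lemma applyDO2_delta (c b : int -> int -> R) P Q x s :
  applyDO c P (applyDO b Q (delta (x + s))) x =
  \sum_(k <- P) \sum_(j <- Q) (k + j == s)%:R * (c k x * b j (x + k)).
Proof.
rewrite /applyDO; apply: eq_bigr => k _; rewrite mulr_sumr; apply: eq_bigr => j _.
rewrite /delta -addrA (inj_eq (addrI x)).
by case: (k + j == s); rewrite ?mulr1 ?mul1r ?mulr0 ?mul0r.
Qed.

Lemma DOz_mul_opz (c b : int -> int -> R) (P Q sh : seq int) :
  (forall j, periodic (b j)) -> uniq sh ->
  (forall k j, k \in P -> j \in Q -> k + j \in sh) ->
  DOz n.+1 c P *m DOz n.+1 b Q = opz (fun V => applyDO c P (applyDO b Q V)) sh.
Proof.
move=> per_b uniq_sh PQ_sh; rewrite DOz_mul //.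
transitivity (\sum_(k <- P) \sum_(s <- sh) \sum_(j <- Q)
    diag_seq (fun x => (k + j == s)%:R * (c k x * b j (x + k))) *m Tp s).
  apply: eq_big_seq => k kP; rewrite exchange_big /=; apply: eq_big_seq => j jQ.
  rewrite (bigD1_seq (k + j)) ?PQ_sh //= big1 => [|s ne_s].
    by rewrite addr0; congr (_ *m _); apply: eq_diag_seq => x; rewrite eqxx mul1r.
  rewrite (eq_diag_seq (b' := fun=> 0)) ?diag_seq0 ?mul0mx // => x.
  by rewrite eq_sym (negbTE ne_s) mul0r.
rewrite exchange_big; apply: eq_bigr => s _.
under eq_bigr do rewrite -mulmx_suml diag_seq_sum.
rewrite -mulmx_suml diag_seq_sum; congr (_ *m _); apply: eq_diag_seq => x.
by rewrite applyDO2_delta.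
Qed.

End SymbolOfDifferenceOperators.

Theorem mainTheorem8 (R : realFieldType) (n : nat) (Jm Jp : seq int) (dJ : nat)
  (a at_ : int -> int -> R) :
  (0 < n)%N ->
  (0 < dJ)%N -> is_AP_with dJ Jm -> is_AP_with dJ Jp ->
  ~~ has (fun j => j \in Jp) Jm ->
  periodic_coeffs n a -> periodic_coeffs n at_ ->
  (* D corresponds to a (generic) twisted J-corrugated n-gon, J = Jm ++ Jp *)
  corresponds_to_corrugated_polygon n (Jm ++ Jp) a ->
  (* genericity: the inverses in the statement exist *)
  DOz n a Jm \in unitmx -> DOz n at_ Jm \in unitmx ->
  (* tilde D_+ D_- = tilde D_- D_+ as operators on bi-infinite sequences *)
  (forall (V : int -> R) (i : int),
      applyDO at_ Jp (applyDO a Jm V) i = applyDO at_ Jm (applyDO a Jp V) i) ->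
  invmx (DOz n at_ Jm) *m DOz n at_ Jp = DOz n a Jp *m invmx (DOz n a Jm).
Proof.
case: n => [//|n] _ _ _ _ _ per_a _ _ Dm_unit Dtm_unit commute_ops.
have per_aj j : periodic n (a j) by move=> i; exact: per_a.
set S := undup [seq k + j | k <- Jp, j <- Jm].
have S_sums k j : k \in Jp -> j \in Jm -> k + j \in S.
  by move=> kJp jJm; rewrite mem_undup allpairs_f.
have symbols_eq : DOz n.+1 at_ Jp *m DOz n.+1 a Jm = DOz n.+1 at_ Jm *m DOz n.+1 a Jp.
  rewrite !(@DOz_mul_opz _ _ _ _ _ _ S) ?undup_uniq //; last first.
    by move=> k j kJm jJp; rewrite addrC S_sums.
  exact: eq_opz.
by rewrite -[LHS](mulmxK Dm_unit) -(mulmxA (invmx _)) symbols_eq (mulKmx Dtm_unit).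
Qed.
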